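(* Let $\mathtt{type}\in\{\mathrm{lin},\log\}$. There exist an input dimension $d$, a set $\mathcal{X}$ of input sequences, and a target $\mathbf{H}$ of the form $\mathbf{H}_t(\boldsymbol{X})=f(\boldsymbol{x}_t,\boldsymbol{x}_{t-g(\boldsymbol{x}_t)})$ belonging to the class $\mathcal{H}^{\mathrm{Adap}}_{(1,1)}$, such that: (A) for every $\epsilon>0$ there exist $H\in\mathbb{N}_+$ and a one-layer, $H$-head normalization-free attention model $\mathbf{Attn}^{\mathrm{DP}}$ with $\mathtt{type}$-RPE with $|||\mathbf{H}-\mathbf{Attn}^{\mathrm{DP}}|||\le\epsilon$; (B) for every $H\in\mathbb{N}_+$ and every one-layer, $H$-head dot-product-free attention model $\mathbf{Attn}^{\mathrm{DPF}}$ with $\mathtt{type}$-RPE, $|||\mathbf{H}-\mathbf{Attn}^{\mathrm{DPF}}|||\ge\frac23$.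
   Context: Input sequences $\boldsymbol{X}=(\boldsymbol{x}_t)_{t\in\mathbb{Z}}$, $\boldsymbol{x}_t\in\mathbb{R}^d$, range over a set $\mathcal{X}$ whose elements satisfy $\|\boldsymbol{x}_t\|_2\le1$. $|||\mathbf{G}|||=\sup_{t\in\mathbb{Z}}\sup_{\boldsymbol{X}\in\mathcal{X}}|\mathbf{G}_t(\boldsymbol{X})|$ for $\mathbf{G}_t:\mathcal{X}\to\mathbb{R}$. $\sigma(z)=\max\{z,0\}$. Barron space $\mathcal{B}$: continuous $f:\mathbb{R}^k\to\mathbb{R}$ with $f(\boldsymbol{x})=\int a\sigma(\boldsymbol{b}^\top\boldsymbol{x}+c)\rho(da,d\boldsymbol{b},dc)$ for a probability measure $\rho$ and $\|f\|_{\mathcal{B}}=\inf_\rho\mathbb{E}_\rho[|a|(\|\boldsymbol{b}\|_1+|c|)]<\infty$; $\mathrm{Lip}$ = Lipschitz functions. The class $\mathcal{H}^{\mathrm{Adap}}_{(1,1)}$: targets $\mathbf{H}_t(\boldsymbol{X})=f(\boldsymbol{x}_t,\boldsymbol{x}_{t-g(\boldsymbol{x}_t)})$ where $f\in\mathcal{B}\cap\mathrm{Lip}$, $g\in\mathcal{B}$, and there is an integer $T$ with $g(\boldsymbol{x})\in\{1,\dots,T\}$ for every token $\boldsymbol{x}$ of every $\boldsymbol{X}\in\mathcal{X}$. RPE: $\phi_{\log}(z)=-\log z$ ($z\ge1$), $-\infty$ otherwise; $\phi_{\mathrm{lin}}(z)=-z$ ($z\ge0$), $-\infty$ otherwise;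 $e^{-\infty}=0$. A one-layer, $H$-head normalization-free attention model with $\mathtt{type}$-RPE (embedding dimension $D$): $\boldsymbol{x}^{(0)}_t=\boldsymbol{W}_E\boldsymbol{x}_t+\boldsymbol{b}_E\in\mathbb{R}^D$ and $$\mathbf{Attn}_t(\boldsymbol{X})=\boldsymbol{W}_O\sum_{h=1}^H\boldsymbol{W}_V^{(h)}\sum_{s=0}^\infty\boldsymbol{x}^{(0)}_{t-s}\exp\big(\langle\boldsymbol{W}_Q^{(h)}\boldsymbol{x}^{(0)}_t,\boldsymbol{W}_K^{(h)}\boldsymbol{x}^{(0)}_{t-s}\rangle+p^{(h)}\phi_{\mathtt{type}}(s)\big)\in\mathbb{R},$$ with $\boldsymbol{W}_O\in\mathbb{R}^{1\times D}$, $\boldsymbol{W}_V^{(h)}\in\mathbb{R}^{D\times D}$, $\boldsymbol{W}_Q^{(h)},\boldsymbol{W}_K^{(h)}$ matrices with $D$ columns and equal numbers of rows, $p^{(h)}>0$. A dot-product-free attention model is one of this form with $\boldsymbol{W}_Q^{(h)}=\boldsymbol{W}_K^{(h)}=\mathbf{0}$ for all $h$. *)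

From HB Require Import structures.
From mathcomp Require Import all_boot all_order all_algebra.
From mathcomp Require Import all_classical all_reals all_analysis.
Unset Printing Implicit Defensive.
Import Order.TTheory GRing.Theory Num.Theory.
Import numFieldNormedType.Exports.
Local Open Scope classical_set_scope.
Local Open Scope ring_scope.

Section Defs.
Variable R : realType.

Definition relu (z : R) : R := Num.max z 0.

Definition norm2 {k : nat} (x : 'cV[R]_k) : R := Num.sqrt (\sum_i (x i 0) ^+ 2).

(* Barron space on R^k, with the mixing probability measure rho given as the
   law of random parameters (a, b, c) defined on some probability space. *)
Definition barron {k : nat} (f : 'cV[R]_k -> R) : Prop :=
  continuous f /\
  exists (dT : measure_display) (T : measurableType dT) (P : probability T R)
         (a : T -> R) (b : 'I_k -> T -> R) (c : T -> R),
    measurable_fun setT a /\ (forall i, measurable_fun setT (b i)) /\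
    measurable_fun setT c /\
    (\int[P]_w (`|a w| * (\sum_i `|b i w| + `|c w|))%:E < +oo)%E /\
    forall x : 'cV[R]_k,
      (f x)%:E = (\int[P]_w (a w * relu (\sum_i b i w * x i 0 + c w))%:E)%E.

Definition lipschitz {k : nat} (f : 'cV[R]_k -> R) : Prop :=
  exists L : R, forall x y, `|f x - f y| <= L * norm2 (x - y).

Definition input_set {d : nat} (Xs : set (int -> 'cV[R]_d)) : Prop :=
  forall X, Xs X -> forall t, norm2 (X t) <= 1.

Definition adap11 {d : nat} (Xs : set (int -> 'cV[R]_d))
    (H : int -> (int -> 'cV[R]_d) -> R) : Prop :=
  exists (f : 'cV[R]_(d + d) -> R) (g : 'cV[R]_d -> R) (T : nat),
    barron f /\ lipschitz f /\ barron g /\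
    forall X, Xs X -> forall t, exists n : nat,
      (1 <= n <= T)%N /\ g (X t) = n%:R /\
      H t X = f (col_mx (X t) (X (t - n%:Z)%R)).

Inductive rpe_type := RPE_lin | RPE_log.

(* exp (p * phi_type s), with the convention e^{-oo} = 0 *)
Definition rpe_weight (ty : rpe_type) (p : R) (s : nat) : R :=
  match ty with
  | RPE_lin => expR (p * - s%:R)
  | RPE_log => if (1 <= s)%N then expR (p * - ln s%:R) else 0
  end.

Set Implicit Arguments.
Record attn_model (d H : nat) := AttnModel {
  am_D : nat;
  am_WE : 'M[R]_(am_D, d);
  am_bE : 'cV[R]_am_D;
  am_WO : 'M[R]_(1, am_D);
  am_WV : 'I_H -> 'M[R]_am_D;
  am_r : 'I_H -> nat;
  am_WQ : forall h : 'I_H, 'M[R]_(am_r h, am_D);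
  am_WK : forall h : 'I_H, 'M[R]_(am_r h, am_D);
  am_p : 'I_H -> R;
  am_p_pos : forall h, 0 < am_p h }.
Unset Implicit Arguments.

Definition dot_product_free {d H : nat} (M : attn_model d H) : Prop :=
  forall h, am_WQ M h = 0 /\ am_WK M h = 0.

Variables (d H : nat).

Definition embed (M : attn_model d H) (X : int -> 'cV[R]_d) (u : int)
  : 'cV[R]_(am_D M) := am_WE M *m X u + am_bE M.


Definition attn_term (ty : rpe_type) (M : attn_model d H) (h : 'I_H)
    (t : int) (X : int -> 'cV[R]_d) (j : 'I_(am_D M)) (s : nat) : R :=
  let xt := embed M X t in
  let xs := embed M X (t - s%:Z)%R in
  (xs j 0) *
  expR (\sum_i ((am_WQ M h *m xt) i 0 * (am_WK M h *m xs) i 0)) *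
  rpe_weight ty (am_p M h) s.


Definition attn_defined (ty : rpe_type) (M : attn_model d H)
    (Xs : set (int -> 'cV[R]_d)) : Prop :=
  forall X, Xs X -> forall t h j, cvgn (series (attn_term ty M h t X j)).

Definition attn_out (ty : rpe_type) (M : attn_model d H)
    (t : int) (X : int -> 'cV[R]_d) : R :=
  (am_WO M *m \sum_h (am_WV M h *m
      \col_j limn (series (attn_term ty M h t X j)))) 0 0.

Definition sup_err (ty : rpe_type) (M : attn_model d H)
    (Xs : set (int -> 'cV[R]_d)) (Htgt : int -> (int -> 'cV[R]_d) -> R)
  : \bar R :=
  ereal_sup [set (`|Htgt t X - attn_out ty M t X|)%:E | t in [set: int] & X in Xs].

End Defs.

Arguments input_set {R d}.
Arguments adap11 {R d}.
Arguments dot_product_free {R d H}.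
Arguments attn_defined {R d H}.
Arguments attn_out {R d H}.
Arguments sup_err {R d H}.
Arguments attn_term {R d H}.
Arguments embed {R d H}.
Arguments barron {R k}.
Arguments lipschitz {R k}.
Arguments norm2 {R k}.
Arguments rpe_weight {R}.
Arguments relu {R}.

From Pilot Require Import Defs.
From HB Require Import structures.
From mathcomp Require Import all_boot all_order all_algebra.
From mathcomp Require Import all_classical all_reals all_analysis.
From mathcomp Require Import ring lra zify.
Import Order.TTheory GRing.Theory Num.Theory.
Import numFieldNormedType.Exports.
Local Open Scope classical_set_scope.
Local Open Scope ring_scope.
(* Dot-product-free attention is affine in the input sequence: its attention
   weights depend only on positions, so the sequence enters linearly through the
   embedding.  Take inputs encoding two bits, b1 in the key at time 0 and b2 in
   the query at time 1, and the target 3 (b1 && b2) at time 1.  The four inputs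
   satisfy X11 = X01 + X10 - X00, hence so do the outputs of any dot-product-free
   model, while the targets do not (3 versus 0); one of the four errors is then
   at least 3/4.  With dot products, a head whose query carries b2 and whose key
   carries b1 contributes the factor exp(b1 b2); subtracting the same head
   without query leaves (e - 1) b1 b2 / 2 times a positional weight, which a
   gain rescales to the target exactly. *)

Section Neuron.
Variables (R : realType) (k : nat).

Definition neuron (a : R) (b : 'I_k -> R) (c : R) (x : 'cV[R]_k) : R :=
  a * relu (\sum_i b i * x i 0 + c).

Lemma relu_id (z : R) : 0 <= z -> relu z = z.
Proof. by move=> z_ge0; rewrite /relu max_l. Qed.

Lemma relu_eq0 (z : R) : z <= 0 -> relu z = 0.
Proof. by move=> z_le0; rewrite /relu max_r. Qed.

Lemma relu_1lipschitz (z w : R) : `|relu z - relu w| <= `|z - w|.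
Proof.
have reluE (u : R) : relu u = (u + `|u|) / 2.
  by rewrite /relu maxr_absE subr0 addr0.
rewrite !reluE -mulrBl normrM normfV [`|2|]ger0_norm // ler_pdivrMr // mulr2n mulrDr mulr1.
rewrite opprD addrACA; apply: le_trans (ler_normD _ _) _.
by rewrite lerD2l ler_dist_dist.
Qed.

Lemma norm2_coord_le (x : 'cV[R]_k) i : `|x i 0| <= norm2 x.
Proof.
rewrite /norm2 -sqrtr_sqr ler_sqrt; last by apply: sumr_ge0 => j _; exact: sqr_ge0.
by rewrite (bigD1 i) //= lerDl; apply: sumr_ge0 => j _; exact: sqr_ge0.
Qed.

Lemma continuous_neuron a b c : continuous (neuron a b c).
Proof.
move=> x.
have coord i : continuous (fun y : 'cV[R]_k => b i * y i 0).
  by move=> y; apply: continuousM; [exact: cst_continuous | exact: coord_continuous].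
have sum_cont : continuous (fun y : 'cV[R]_k => \sum_i b i * y i 0).
  exact: (continuous_big (x0 := 0) (P := xpredT) add_continuous (fun i _ => coord i)).
have affine : {for x, continuous (fun y : 'cV[R]_k => \sum_i b i * y i 0 + c)}.
  exact: (@continuousD R R _ _ (fun=> c) x (sum_cont x) (@cst_continuous _ _ _ _)).
have relu_cont := @continuous_max R _ _ (fun=> 0) x affine (@cst_continuous _ _ _ _).
exact: (@continuousM R _ (fun=> a) _ x (@cst_continuous _ _ _ _) relu_cont).
Qed.

Lemma barron_neuron a b c : barron (neuron a b c).
Proof.
split; first exact: continuous_neuron.
have P : probability R R := \d_(0 : R).
exists _, R, P, (fun=> a), (fun i _ => b i), (fun=> c).
split; first exact: measurable_cst.
split; first by move=> i; exact: measurable_cst.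
split; first exact: measurable_cst.
by split=> [|x]; rewrite integral_cst // (_ : _ [set: _] = 1%E) ?mule1 ?ltry //;
  exact: probability_setT.
Qed.

Lemma lipschitz_neuron_bound a b c x y :
  `|neuron a b c x - neuron a b c y| <= `|a| * (\sum_i `|b i|) * norm2 (x - y).
Proof.
rewrite /neuron -mulrBr normrM -mulrA ler_wpM2l //.
apply: le_trans (relu_1lipschitz _ _) _.
rewrite opprD addrACA subrr addr0 -sumrB mulr_suml.
apply: le_trans (ler_norm_sum _ _ _) _; apply: ler_sum => i _.
rewrite -mulrBr normrM ler_wpM2l //.
by have := norm2_coord_le (x - y) i; rewrite !mxE.
Qed.

Lemma lipschitz_neuron a b c : Defs.lipschitz (neuron a b c).
Proof. by exists (`|a| * \sum_i `|b i|) => x y; exact: lipschitz_neuron_bound. Qed.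

End Neuron.

Arguments neuron {R k}.

Lemma cvg_series_finite_support {R : realType} (u : nat -> R) N :
  (forall s, (N <= s)%N -> u s = 0) -> series u @ \oo --> \sum_(s < N) u s.
Proof.
move=> u0; apply: cvg_near_cst; exists N => // n /= Nn.
rewrite /series /= (big_cat_nat (leq0n N) Nn) /= big_mkord.
rewrite [X in _ + X]big_nat_cond [X in _ + X]big1 ?addr0 // => i /andP[/andP[Ni _] _].
exact: u0.
Qed.

Lemma limn_series_single {R : realType} (u : nat -> R) k :
  (forall s, s != k -> u s = 0) -> limn (series u) = u k.
Proof.
move=> u0; apply: cvg_lim => //.
have -> : u k = \sum_(s < k.+1) u s.
  by rewrite big_ord_recr /= big1 ?add0r // => s _; rewrite u0 // ltn_eqF.
by apply: cvg_series_finite_support => s ks; rewrite u0 // gtn_eqF.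
Qed.

Lemma sup_err_ge_at {R : realType} {ty d H} {M : attn_model R d H} {Xs Htgt} t {X} :
  Xs X -> (`|Htgt t X - attn_out ty M t X|%:E <= sup_err ty M Xs Htgt)%E.
Proof. by move=> XsX; apply: ereal_sup_ubound; exists t => //; exists X. Qed.

Lemma readout_affine (R : realType) D H (WO : 'M[R]_(1, D)) (WV : 'I_H -> 'M[R]_D)
    (c1 c2 c3 c4 : 'I_H -> 'I_D -> R) :
  (forall h j, c1 h j = c2 h j + c3 h j - c4 h j) ->
  (WO *m \sum_h (WV h *m \col_j c1 h j)) 0 0 =
  (WO *m \sum_h (WV h *m \col_j c2 h j)) 0 0 + (WO *m \sum_h (WV h *m \col_j c3 h j)) 0 0
  - (WO *m \sum_h (WV h *m \col_j c4 h j)) 0 0.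
Proof.
move=> c1E; have colE h : \col_j c1 h j = \col_j c2 h j + \col_j c3 h j - \col_j c4 h j.
  by apply/matrixP => j k; rewrite !mxE c1E.
under eq_bigr do rewrite colE !mulmxDr mulmxN.
rewrite sumrB big_split /= !mulmxDr mulmxN.
by move: (WO *m _) (WO *m _) (WO *m _) => A B C; rewrite !mxE.
Qed.

Lemma readout_scalar (R : realType) D H (a : R) (k : 'I_D) (w : 'I_H -> R)
    (c : 'I_H -> 'I_D -> R) :
  (a *: 'e_k *m \sum_h ((w h)%:M *m \col_j c h j) : 'M[R]_1) 0 0 = a * \sum_h w h * c h k.
Proof.
rewrite -scalemxAl -rowE !mxE summxE; congr (_ * _); apply: eq_bigr => h _.
by rewrite mul_scalar_mx !mxE.
Qed.

Section DotProductFree.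
Variables (R : realType) (ty : rpe_type) (d H : nat) (M : attn_model R d H).
Hypothesis M_dpf : dot_product_free M.

Lemma attn_term_dpf h t X j s :
  attn_term ty M h t X j s = embed M X (t - s%:Z) j 0 * rpe_weight ty (am_p M h) s.
Proof.
rewrite /attn_term; have [-> ->] := M_dpf h.
by rewrite big1 ?expR0 ?mulr1 // => i _; rewrite !mul0mx mxE mul0r.
Qed.

Lemma attn_out_dpf_affine t X1 X2 X3 X4 :
  (forall u, X1 u = X2 u + X3 u - X4 u) ->
  (forall h j, cvgn (series (attn_term ty M h t X2 j))) ->
  (forall h j, cvgn (series (attn_term ty M h t X3 j))) ->
  (forall h j, cvgn (series (attn_term ty M h t X4 j))) ->
  attn_out ty M t X1 = attn_out ty M t X2 + attn_out ty M t X3 - attn_out ty M t X4.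
Proof.
move=> X1E cvg2 cvg3 cvg4.
have termE h j : attn_term ty M h t X1 j =
    attn_term ty M h t X2 j + attn_term ty M h t X3 j - attn_term ty M h t X4 j.
  apply/funext => s; rewrite !fctE !attn_term_dpf /embed X1E !mulmxDr mulmxN.
  move: (am_WE M *m X2 _) (am_WE M *m X3 _) (am_WE M *m X4 _) => A B C.
  rewrite !mxE -mulrDl -mulrBl; congr (_ * _).
  by move: (A j 0) (B j 0) (C j 0) (am_bE M j 0) => a b c e; lra.
rewrite /attn_out; apply: readout_affine => h j.
rewrite termE lim_seriesB; [|exact: is_cvg_seriesD (cvg2 h j) (cvg3 h j)|exact: cvg4].
by rewrite lim_seriesD; [|exact: cvg2|exact: cvg3].
Qed.

End DotProductFree.

Arguments attn_out_dpf_affine {R ty d H M} M_dpf {t X1 X2 X3 X4}.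

Section Separation.
Variables (R : realType) (ty : rpe_type).

Definition iq : 'I_3 := @Ordinal 3 1 isT.
Definition ik : 'I_3 := @Ordinal 3 2 isT.

(* Coordinate 0 is the value, [iq] holds the query bit b2 at time 1 and [ik]
   the key bit b1 at time 0. *)
Definition token (b1 b2 : bool) (t : int) : 'cV[R]_3 :=
  \col_i [:: (t == 0)%:R / 2; ((t == 1) && b2)%:R; ((t == 0) && b1)%:R / 2]`_i.

Definition inputs : set (int -> 'cV[R]_3) := [set X | exists b1 b2, X = token b1 b2].

Definition readout_weight (i : 'I_(3 + 3)) : R := ((i == 1 :> nat) || (i == 5 :> nat))%:R.

Definition target (t : int) (X : int -> 'cV[R]_3) : R :=
  neuron 6 readout_weight (-1) (col_mx (X t) (X (t - 1))).

Lemma targetE t X : target t X = 6 * relu (X t iq 0 + X (t - 1) ik 0 - 1).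
Proof.
rewrite /target /neuron big_split_ord !big_ord_recl !big_ord0 !col_mxEu !col_mxEd.
rewrite /readout_weight /= !mul0r !mul1r !add0r !addr0.
by congr (_ * relu (_ + _ + _)); congr (X _ _ _); apply: val_inj.
Qed.

Lemma token_far b1 b2 t (s : nat) : (`|t|%N + 2 <= s)%N -> token b1 b2 (t - s%:Z) = 0.
Proof.
move=> far; apply/matrixP => i j; rewrite !mxE.
have -> : (t - s%:Z == 0) = false by apply/negbTE/eqP; lia.
have -> : (t - s%:Z == 1) = false by apply/negbTE/eqP; lia.
by case: i => -[|[|[|//]]] _ /=; rewrite ?mul0r.
Qed.

Lemma token_affine u :
  token true true u = token false true u + token true false u - token false false u.
Proof.
apply/matrixP => i j; rewrite !mxE.
by case: (u == 0); case: (u == 1); case: i => -[|[|[|//]]] _ /=; lra.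
Qed.

Lemma target_token t b1 b2 : target t (token b1 b2) = ((t == 1) && b1 && b2)%:R * 3.
Proof.
rewrite targetE !mxE /=.
have [->|t_neq1] := eqVneq t 1; last first.
  rewrite relu_eq0 ?mulr0 ?mul0r //.
  by case: (t - 1 == 0); case: b1; rewrite /= ?mulr1n ?mulr0n; lra.
rewrite subrr eqxx; case: b1; case: b2; rewrite /= ?mulr1n ?mulr0n.
- by rewrite relu_id; lra.
all: by rewrite relu_eq0 ?mulr0 ?mul0r //; lra.
Qed.

Lemma input_set_inputs : input_set inputs.
Proof.
move=> _ [b1 [b2 ->]] t; rewrite /norm2 -sqrtr1 ler_sqrt // !big_ord_recl big_ord0 !mxE /=.
have [->|_] := eqVneq t 0.
  by case: b1; case: b2; rewrite /= ?mulr1n ?mulr0n !expr2; lra.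
by case: (t == 1); case: b2; rewrite /= ?mulr1n ?mulr0n !expr2; lra.
Qed.

Lemma adap11_target : adap11 inputs target.
Proof.
exists (neuron 6 readout_weight (-1)), (neuron 1 (fun=> 0) 1), 1%N.
split; first exact: barron_neuron.
split; first exact: lipschitz_neuron.
split; first exact: barron_neuron.
move=> X _ t; exists 1%N; split=> //; split=> //.
by rewrite /neuron big1 ?add0r ?relu_id ?mul1r // => i _; rewrite mul0r.
Qed.

Definition dp_gain : R := 6 / ((expR 1 - 1) * rpe_weight ty 1 1).
Definition dp_query (h : 'I_2) : R := if h == ord0 then 2 else 0.
Definition dp_sign (h : 'I_2) : R := if h == ord0 then 1 else -1.

Definition dp_model : attn_model R 3 2 := {|
  am_D := 3;
  am_WE := 1%:M;
  am_bE := 0;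
  am_WO := dp_gain *: 'e_0;
  am_WV := fun h => (dp_sign h)%:M;
  am_r := fun _ => 1%N;
  am_WQ := fun h => dp_query h *: 'e_iq;
  am_WK := fun _ => 'e_ik;
  am_p := fun _ => 1;
  am_p_pos := fun _ => ltr01 |}.

Lemma dp_model_term h t X j s :
  attn_term ty dp_model h t X j s =
  X (t - s%:Z) j 0 * expR (dp_query h * X t iq 0 * X (t - s%:Z) ik 0) * rpe_weight ty 1 s.
Proof.
by rewrite /attn_term /embed /= !mul1mx !addr0 big_ord1 -scalemxAl -!rowE !mxE.
Qed.

Lemma dp_model_out t X :
  attn_out ty dp_model t X =
  dp_gain * \sum_h dp_sign h * limn (series (attn_term ty dp_model h t X ord0)).
Proof. exact: readout_scalar. Qed.

Lemma dp_model_defined : attn_defined ty dp_model inputs.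
Proof.
move=> _ [b1 [b2 ->]] t h j.
apply: (cvgP _ (cvg_series_finite_support _ (`|t|%N + 2) _)) => s far.
by rewrite dp_model_term token_far // mxE !mul0r.
Qed.

Lemma dp_head_gap_token b1 b2 t s :
  attn_term ty dp_model ord0 t (token b1 b2) ord0 s -
  attn_term ty dp_model ord_max t (token b1 b2) ord0 s =
  ((t == 1) && (s == 1%N) && b1 && b2)%:R * ((expR 1 - 1) * rpe_weight ty 1 1 / 2).
Proof.
rewrite !dp_model_term /dp_query /= !mul0r expR0 mulr1 !mxE /=.
have [->|t_neq1] := eqVneq t 1; last by rewrite /= !mulr0n !mulr0 !mul0r expR0 mulr1 subrr.
have [->|s_neq1] := eqVneq s 1%N; last first.
  have -> : (1 - s%:Z == 0) = false by apply/negbTE/eqP; move/eqP: s_neq1; lia.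
  by rewrite /= !mul0r subrr.
rewrite subrr eqxx; case: b1; case: b2; rewrite /= ?mulr1n ?mulr0n.
- have -> : 2 * 1 * (1 / 2) = 1 :> R by lra.
  by move: (expR 1) (rpe_weight ty 1 1) => e w; ring.
all: by rewrite ?(mulr0, mul0r) expR0 mulr1 subrr.
Qed.

Lemma dp_gain_mul_gap : dp_gain * ((expR 1 - 1) * rpe_weight ty 1 1 / 2) = 3.
Proof.
have e_neq1 : expR 1 - 1 != 0 :> R by rewrite subr_eq0 gt_eqF // expR_gt1.
have w_neq0 : rpe_weight ty 1 1 != 0 :> R.
  by case: ty; rewrite /rpe_weight /=; apply: lt0r_neq0; exact: expR_gt0.
by rewrite /dp_gain; field; rewrite e_neq1 w_neq0.
Qed.

Lemma dp_model_token b1 b2 t : attn_out ty dp_model t (token b1 b2) = target t (token b1 b2).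
Proof.
have cvg_head h : cvgn (series (attn_term ty dp_model h t (token b1 b2) ord0)).
  by apply: dp_model_defined; exists b1, b2.
rewrite dp_model_out big_ord_recl big_ord1.
have -> : lift ord0 ord0 = ord_max :> 'I_2 by apply: val_inj.
rewrite /dp_sign /= mul1r mulN1r -lim_seriesB; [|exact: cvg_head|exact: cvg_head].
rewrite (limn_series_single _ 1%N) => [|s s_neq1]; rewrite fctE dp_head_gap_token.
  by rewrite eqxx andbT mulrCA dp_gain_mul_gap target_token.
by rewrite (negbTE s_neq1) andbF mul0r.
Qed.

Lemma dpf_sup_err_ge H (M : attn_model R 3 H) :
  dot_product_free M -> attn_defined ty M inputs ->
  ((2 / 3 : R)%:E <= sup_err ty M inputs target)%E.
Proof.
move=> M_dpf M_def.
have mem b1 b2 : inputs (token b1 b2) by exists b1, b2.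
pose err b1 b2 := target 1 (token b1 b2) - attn_out ty M 1 (token b1 b2).
have errE : err true true = err false true + err true false - err false false + 3.
  rewrite /err !target_token /= (attn_out_dpf_affine M_dpf token_affine);
    try exact: M_def (mem _ _) 1.
  by move: (attn_out _ _ _ _) (attn_out _ _ _ _) (attn_out _ _ _ _) => a b c; lra.
have [b1 [b2 err_ge]] : exists b1 b2, 2 / 3 <= `|err b1 b2|.
  clearbody err.
  have [|e01] := boolP (2 / 3 <= `|err false true|); first by exists false, true.
  have [|e10] := boolP (2 / 3 <= `|err true false|); first by exists true, false.
  have [|e00] := boolP (2 / 3 <= `|err false false|); first by exists false, false.
  exists true, true; move: e01 e10 e00; rewrite -!ltNge errE !ltr_norml ler_normr.
  by move=> /andP[? ?] /andP[? ?] /andP[? ?]; apply/orP; left; lra.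
by apply: le_trans (sup_err_ge_at 1 (mem b1 b2)); rewrite lee_fin.
Qed.

End Separation.

Theorem proposition4p2 (R : realType) (ty : rpe_type) :
  exists (d : nat) (Xs : set (int -> 'cV[R]_d))
         (Htgt : int -> (int -> 'cV[R]_d) -> R),
    input_set Xs /\ adap11 Xs Htgt /\
    (forall eps : R, 0 < eps ->
       exists H : nat, (0 < H)%N /\
       exists M : attn_model R d H,
         attn_defined ty M Xs /\ (sup_err ty M Xs Htgt <= eps%:E)%E) /\
    (forall H : nat, (0 < H)%N ->
       forall M : attn_model R d H, dot_product_free M ->
         attn_defined ty M Xs ->
         ((2 / 3 : R)%:E <= sup_err ty M Xs Htgt)%E).
Proof.
exists 3%N, (inputs R), (target R).
split; first exact: input_set_inputs.
split; first exact: adap11_target.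
split=> [eps eps_gt0 | H _ M]; last exact: dpf_sup_err_ge.
exists 2%N; split=> //; exists (dp_model R ty); split; first exact: dp_model_defined.
apply: ge_ereal_sup => _ [t _ [_ [b1 [b2 ->]] <-]].
by rewrite dp_model_token subrr normr0 lee_fin ltW.
Qed.
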